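(* Let $\epsilon:B\to A$ be a local augmentation. (a) If $\alpha,\beta$ are invertible $n\times n$ matrices over $B$ with $\epsilon(\alpha)=\epsilon(\beta)$ the identity matrix, then $D(\alpha\beta)=D(\alpha)D(\beta)$ in $\epsilon^{-1}(1)/C_0$. (b) If $\alpha$ is an $m\times n$ matrix and $\beta$ an $n\times m$ matrix over $B$ (i.e. $\alpha:B^n\to B^m$, $\beta:B^m\to B^n$) and $\epsilon(\alpha)=0$ or $\epsilon(\beta)=0$ (or both), then $D(1+\alpha\beta)=D(1+\beta\alpha)$ in $\epsilon^{-1}(1)/C_0$.
   Context: Rings are associative with $1$. A local augmentation is a ring homomorphism $\epsilon:B\to A$ with a ring homomorphism $j:A\to B$, $\epsilon j=\mathrm{id}_A$, such that every square matrix over $B$ whose image under $\epsilon$ is invertible is itself invertible; $\epsilon$ is applied to matrices entrywise. Under the hypothesis of (b), $1+\alpha\beta$ and $1+\beta\alpha$ are invertible with $\epsilon$-image the identity. $C_0$ is the subgroup of units of $B$ generated by $\{(1+ab)(1+ba)^{-1}\mid a,b\in B,\ \epsilon(a)=0\}$; it is a normal subgroup of $\epsilon^{-1}(1)$ with abelian quotient. For an invertible $k\times k$ matrix $\gamma$ over $B$ with $\epsilon(\gamma)$ the identity, $D(\gamma)\in\epsilon^{-1}(1)/C_0$ is defined recursively: if $k=1$, $D(\gamma)$ is the class of $\gamma$; if $k\ge2$, write $\gamma=\begin{pmatrix}\gamma_{11}&\gamma_{12}\\ \gamma_{21}&\gamma_{22}\end{pmatrix}$ with $\gamma_{11}$ of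 size $1\times1$ (invertible since $\epsilon(\gamma_{11})=1$) and set $D(\gamma)=\gamma_{11}D(\gamma_{22}-\gamma_{21}\gamma_{11}^{-1}\gamma_{12})$. *)

From HB Require Import structures.
From mathcomp Require Import all_boot all_order all_algebra.
Set Implicit Arguments. Unset Strict Implicit. Unset Printing Implicit Defensive.
Import GRing.Theory.
Local Open Scope ring_scope.

Definition mx_invertible (R : pzRingType) (k : nat) (M : 'M[R]_k) : Prop :=
  exists N : 'M[R]_k, M *m N = 1%:M /\ N *m M = 1%:M.

Definition local_augmentation (B : unitRingType) (A : nzRingType)
    (eps : {rmorphism B -> A}) : Prop :=
  (exists j : {rmorphism A -> B}, forall a : A, eps (j a) = a) /\
  (forall (k : nat) (M : 'M[B]_k),
      mx_invertible (map_mx eps M) -> mx_invertible M).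

(* C_0 : subgroup of units of B generated by (1+ab)(1+ba)^{-1}, eps a = 0.
   Membership = being a finite word in generators and their inverses. *)
Inductive C0 (B : unitRingType) (A : nzRingType) (eps : {rmorphism B -> A})
  : B -> Prop :=
  | C0_one : C0 eps 1
  | C0_gen : forall a b x, eps a = 0 -> C0 eps x ->
      C0 eps ((1 + a * b) * (1 + b * a)^-1 * x)
  | C0_genV : forall a b x, eps a = 0 -> C0 eps x ->
      C0 eps (((1 + a * b) * (1 + b * a)^-1)^-1 * x).

(* Equality of classes in eps^{-1}(1)/C_0 of two elements of eps^{-1}(1). *)
Definition eqC0 (B : unitRingType) (A : nzRingType) (eps : {rmorphism B -> A})
    (x y : B) : Prop := C0 eps (x * y^-1).

Definition schur (B : unitRingType) (k : nat) (g : 'M[B]_k.+1) : 'M[B]_k :=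
  \matrix_(i, j) (g (lift ord0 i) (lift ord0 j)
                  - g (lift ord0 i) ord0 * (g ord0 ord0)^-1 * g ord0 (lift ord0 j)).

(* Representative of D(g): D(g) = g11 * D(schur g), D of a 1x1 matrix is its
   entry (the k = 0 base case only serves the recursion). *)
Fixpoint Drep (B : unitRingType) (k : nat) : 'M[B]_k -> B :=
  match k return 'M[B]_k -> B with
  | 0 => fun _ => 1
  | k'.+1 => fun g => g ord0 ord0 * Drep (schur g)
  end.

(* Elimination on the first row and column writes a block matrix as
   L * diag(a, S) * U with L, U unitriangular and S the Schur complement, so
   D(block) = a * D(S), and unitriangular factors do not change D.  Multiplying
   the factorizations of alpha and beta turns D(alpha beta) into
   u * D(S_alpha * Z * S_beta), where u = a b + r c' and Z = 1 - c' u^-1 r is a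
   rank-one perturbation of the identity.  Induction on the size, together with
   the rank-one case D(1 + c r) = 1 + r c of (b), gives (a) once eps^-1(1)/C_0
   is known to be abelian: for eps v = 1 the commutator u^-1 v u v^-1 is the
   generator (1 + a b)(1 + b a)^-1 with a = u^-1 (v - 1), b = u.  The rank-one
   case follows by induction on the size via the push-through identity
   (1 + p g)^-1 = 1 - p (1 + g p)^-1 g, and (b) in general by induction on the
   inner dimension from 1 + alpha beta = (1 + a0 b0)(1 + W a' b'), where
   W = (1 + a0 b0)^-1, and (a). *)

From HB Require Import structures.
From mathcomp Require Import all_boot all_order all_algebra.
Set Implicit Arguments. Unset Strict Implicit. Unset Printing Implicit Defensive.
Import GRing.Theory.
Local Open Scope ring_scope.

Section Drep.
Variable R : unitRingType.

Lemma mul1D_push (p g t : R) : (1 + g * p) * t = 1 -> (1 + p * g) * (1 - p * t * g) = 1.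
Proof.
move=> gpt; rewrite mulrBr mulr1.
have -> : (1 + p * g) * (p * t * g) = p * ((1 + g * p) * t) * g.
  by rewrite !mulrA mulrDl mulrDr mul1r mulr1 !mulrA.
by rewrite gpt mulr1 addrK.
Qed.

Lemma mulmx1D_push m n (x : 'M[R]_(m, n)) y T : (1%:M + y *m x) *m T = 1%:M ->
  (1%:M + x *m y) *m (1%:M - x *m T *m y) = 1%:M.
Proof.
move=> yxT; rewrite mulmxBr mulmx1.
have -> : (1%:M + x *m y) *m (x *m T *m y) = x *m ((1%:M + y *m x) *m T) *m y.
  by rewrite !mulmxA mulmxDl mulmxDr mul1mx mulmx1 !mulmxA.
by rewrite yxT mulmx1 addrK.
Qed.

Lemma mx_block1 k (G : 'M[R]_(1 + k)) : exists a r c M, G = block_mx a%:M r c M.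
Proof.
by exists (ulsubmx G 0 0), (ursubmx G), (dlsubmx G), (drsubmx G); rewrite -mx11_scalar submxK.
Qed.

Lemma mx_col1 k n (c : 'M[R]_(1 + k, n)) : exists c0 c', c = col_mx c0 c'.
Proof. by exists (usubmx c), (dsubmx c); rewrite vsubmxK. Qed.

Lemma mx_row1 k m (r : 'M[R]_(m, 1 + k)) : exists r0 r', r = row_mx r0 r'.
Proof. by exists (lsubmx r), (rsubmx r); rewrite hsubmxK. Qed.

Lemma block_mx11 k a (r : 'M[R]_(1, k)) c M :
  (block_mx a%:M r c M : 'M_(1 + k)) ord0 ord0 = a.
Proof.
have -> : (ord0 : 'I_(1 + k)) = lshift k ord0 by apply: val_inj.
by rewrite block_mxEul mxE eqxx mulr1n.
Qed.

Lemma Drep_block k a (r : 'M[R]_(1, k)) c M :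
  Drep (block_mx a%:M r c M : 'M_(1 + k)) = a * Drep (M - c *m (a^-1)%:M *m r).
Proof.
have e0 : lshift k (0 : 'I_1) = ord0 by apply: val_inj.
have Drep_submx (g : 'M[R]_(1 + k)) : Drep g = g ord0 ord0 *
    Drep (drsubmx g - dlsubmx g *m ((g ord0 ord0)^-1)%:M *m ursubmx g).
  rewrite /=; congr (_ * Drep _); apply/matrixP => i j.
  by rewrite !mxE big_ord1 !mxE big_ord1 !mxE /= mulr1n e0 !rshift1.
by rewrite Drep_submx block_mx11 block_mxKdr block_mxKdl block_mxKur.
Qed.

Lemma Drep1 k : Drep (1%:M : 'M[R]_k) = 1.
Proof.
elim: k => [|k IHk] //; rewrite -[k.+1]/(1 + k) scalar_mx_block Drep_block.
by rewrite !mul0mx subr0 mul1r.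
Qed.

Lemma block_lowerK k a (r : 'M[R]_(1, k)) c M : a \is a GRing.unit ->
  block_mx 1%:M 0 (c *m (a^-1)%:M) 1%:M *m block_mx a%:M r 0 (M - c *m (a^-1)%:M *m r)
  = block_mx a%:M r c M :> 'M_(1 + k).
Proof.
move=> ua; rewrite mulmx_block !mul1mx !mul0mx ?mulmx0 !addr0.
by rewrite -mulmxA -scalar_mxM mulVr // mulmx1 addrC subrK.
Qed.

Lemma block_upperK k b (r : 'M[R]_(1, k)) c M : b \is a GRing.unit ->
  block_mx b%:M 0 c (M - c *m (b^-1)%:M *m r) *m block_mx 1%:M ((b^-1)%:M *m r) 0 1%:M
  = block_mx b%:M r c M :> 'M_(1 + k).
Proof.
move=> ub; rewrite mulmx_block !mulmx1 ?mul0mx !mulmx0 ?addr0 ?add0r.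
by rewrite mulmxA -scalar_mxM mulrV // mul1mx mulmxA addrC subrK.
Qed.

Lemma Drep_lower k (x : 'M[R]_(k, 1)) a r c M : a \is a GRing.unit ->
  Drep (block_mx 1%:M 0 x 1%:M *m block_mx a%:M r c M : 'M_(1 + k))
  = Drep (block_mx a%:M r c M : 'M_(1 + k)).
Proof.
move=> ua; rewrite mulmx_block !mul1mx !mul0mx ?addr0 ?add0r !Drep_block.
by rewrite !mulmxDl -(mulmxA x) -scalar_mxM mulrV // mulmx1 opprD addrACA subrr add0r.
Qed.

Lemma Drep_upper k (y : 'M[R]_(1, k)) a r c M : a \is a GRing.unit ->
  Drep (block_mx a%:M r c M *m block_mx 1%:M y 0 1%:M : 'M_(1 + k))
  = Drep (block_mx a%:M r c M : 'M_(1 + k)).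
Proof.
move=> ua; rewrite mulmx_block !mulmx1 !mulmx0 !addr0 !Drep_block.
rewrite mulmxDr mulmxA -(mulmxA c) -scalar_mxM mulVr // mulmx1.
by rewrite opprD addrACA subrr add0r.
Qed.

Lemma mul_upper_lower k a b (r : 'M[R]_(1, k)) c (S T : 'M_k) :
  block_mx a%:M r 0 S *m block_mx b%:M 0 c T
  = block_mx (a * b + (r *m c) 0 0)%:M (r *m T) (S *m c) (S *m T) :> 'M_(1 + k).
Proof.
by rewrite mulmx_block !mul0mx !mulmx0 ?addr0 ?add0r -scalar_mxM raddfD /= -mx11_scalar.
Qed.

Lemma Drep_unitriangular k (x : 'M[R]_(k, 1)) y a r c M : a \is a GRing.unit ->
  Drep (block_mx 1%:M 0 x 1%:M *m block_mx a%:M r c M *m block_mx 1%:M y 0 1%:M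
        : 'M_(1 + k)) = Drep (block_mx a%:M r c M : 'M_(1 + k)).
Proof.
have GU : block_mx a%:M r c M *m block_mx 1%:M y 0 1%:M
          = block_mx a%:M (a%:M *m y + r) c (c *m y + M) :> 'M_(1 + k).
  by rewrite mulmx_block !mulmx1 !mulmx0 !addr0.
by move=> ua; rewrite -mulmxA GU Drep_lower // -GU Drep_upper.
Qed.

Lemma Drep_mul_block k a b (r r' : 'M[R]_(1, k)) c c' M M'
    (u := a * b + (r *m c') ord0 ord0) :
  a \is a GRing.unit -> b \is a GRing.unit -> u \is a GRing.unit ->
  Drep (block_mx a%:M r c M *m block_mx b%:M r' c' M' : 'M_(1 + k)) =
  u * Drep ((M - c *m (a^-1)%:M *m r) *m (1%:M - c' *m (u^-1)%:M *m r)
            *m (M' - c' *m (b^-1)%:M *m r')).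
Proof.
move=> ua ub uu; rewrite -(block_lowerK r c M ua) -(block_upperK r' c' M' ub).
rewrite mulmxA -(mulmxA _ _ (block_mx b%:M 0 c' _)) mul_upper_lower.
rewrite Drep_unitriangular // Drep_block.
rewrite -/u; congr (_ * Drep _); rewrite -!mulmxA -mulmxBr; congr (_ *m _).
by rewrite mulmxBl mul1mx !mulmxA.
Qed.

Lemma Drep_1D_col_rowE k g p (c : 'M[R]_(k, 1)) (r : 'M[R]_(1, k)) :
  1 + g * p \is a GRing.unit -> 1 + p * g \is a GRing.unit ->
  Drep (1%:M + col_mx g%:M c *m row_mx p%:M r : 'M_(1 + k))
  = (1 + g * p) * Drep (1%:M + c *m (((1 + p * g)^-1)%:M *m r)).
Proof.
move=> ugp upg; rewrite mul_col_row (scalar_mx_block 1 k) add_block_mx !add0r.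
rewrite -scalar_mxM -[1%:M + _%:M]raddfD Drep_block; congr (_ * Drep _).
have -> : (1 + p * g)^-1 = 1 - p * (1 + g * p)^-1 * g.
  by apply: (mulrI upg); rewrite mulrV // mul1D_push // mulrV.
by rewrite raddfB /= !scalar_mxM mulmxBl mul1mx mulmxBr addrA !mulmxA.
Qed.

End Drep.

Section Augmentation.
Variables (B : unitRingType) (A : nzRingType) (eps : {rmorphism B -> A}).
(* The only consequence of locality that is used. *)
Hypothesis eps1_unit : forall x : B, eps x = 1 -> x \is a GRing.unit.

Local Notation C0 := (C0 eps).
Local Notation "x ~ y" := (eqC0 eps x y) (at level 70).

Lemma eps1M x y : eps x = 1 -> eps y = 1 -> eps (x * y) = 1.
Proof. by move=> hx hy; rewrite rmorphM hx hy mulr1. Qed.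

Lemma eps1V x : eps x = 1 -> eps x^-1 = 1.
Proof. by move=> hx; rewrite -[LHS]mulr1 -hx -rmorphM mulVr ?rmorph1 ?eps1_unit. Qed.

Lemma eps1_1D a b : eps a = 0 \/ eps b = 0 -> eps (1 + a * b) = 1.
Proof. by rewrite rmorphD rmorph1 rmorphM => -[] ->; rewrite ?mul0r ?mulr0 addr0. Qed.

Local Hint Resolve eps1M eps1V eps1_unit rmorph1 : core.
Local Hint Extern 1 (_ = 1) => apply: eps1_1D; tauto : core.

Lemma C0M x y : C0 x -> C0 y -> C0 (x * y).
Proof.
by elim=> [|a b z ha _ IH|a b z ha _ IH] Cy; rewrite ?mul1r // -mulrA; constructor; auto.
Qed.

Lemma C0_generator a b : eps a = 0 \/ eps b = 0 -> C0 ((1 + a * b) * (1 + b * a)^-1).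
Proof.
rewrite -[X in C0 X]mulr1 => -[ha | hb]; first exact (C0_gen b ha (C0_one eps)).
have := C0_genV a hb (C0_one eps).
by rewrite invrM ?invrK ?unitrV //; auto.
Qed.

Lemma C0_eps1 x : C0 x -> eps x = 1.
Proof. by elim=> // a b z ha _ hz; auto. Qed.

Lemma C0_commutator u v : u \is a GRing.unit -> eps v = 1 -> C0 (u^-1 * v * u * v^-1).
Proof.
move=> uu hv; have ha : eps (u^-1 * (v - 1)) = 0.
  by rewrite rmorphM rmorphB rmorph1 hv subrr mulr0.
have := C0_generator (b := u) (or_introl ha).
have -> : 1 + u^-1 * (v - 1) * u = u^-1 * v * u.
  by rewrite mulrBr mulrBl mulr1 mulVr // addrC subrK.
by rewrite mulrA divrr // mul1r addrC subrK.
Qed.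

Lemma C0_conj u x : u \is a GRing.unit -> C0 x -> C0 (u * x * u^-1).
Proof.
move=> uu Cx; have hx := C0_eps1 Cx.
rewrite -(divrK (eps1_unit hx) (u * x * u^-1)); apply: C0M Cx.
by move: (@C0_commutator u^-1 x); rewrite unitrV invrK; apply.
Qed.

Lemma eqC0_refl x : eps x = 1 -> x ~ x.
Proof. by move=> hx; rewrite /eqC0 divrr ?eps1_unit //; exact: C0_one. Qed.

Local Hint Resolve eqC0_refl : core.

Lemma eqC0_eps1 x y : eps y = 1 -> x ~ y -> eps x = 1.
Proof. by move=> hy /C0_eps1 hxy; rewrite -(divrK (eps1_unit hy) x); auto. Qed.

Lemma eqC0_trans y x z : eps y = 1 -> x ~ y -> y ~ z -> x ~ z.
Proof. by move=> hy xy yz; move: (C0M xy yz); rewrite /eqC0 mulrA divrK ?eps1_unit. Qed.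

Lemma eqC0_mul x x' y y' : eps x' = 1 -> eps y' = 1 -> x ~ x' -> y ~ y' -> x * y ~ x' * y'.
Proof.
move=> hx' hy' xx' yy'; have ux : x \is a GRing.unit by apply/eps1_unit/(eqC0_eps1 hx').
rewrite /eqC0 invrM ?eps1_unit //.
have -> : x * y * (y'^-1 * x'^-1) = x * (y / y') * x^-1 * (x / x').
  by rewrite -!mulrA mulKr.
by apply: C0M => //; apply: C0_conj.
Qed.

Lemma eqC0_mulC x y : eps x = 1 -> eps y = 1 -> x * y ~ y * x.
Proof.
move=> hx hy; move: (@C0_commutator x^-1 y); rewrite unitrV invrK.
by rewrite /eqC0 invrM ?eps1_unit // !mulrA; apply; auto.
Qed.

Lemma eqC0_conj u x : u \is a GRing.unit -> eps x = 1 -> u * x * u^-1 ~ x.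
Proof. by move: (@C0_commutator u^-1 x); rewrite unitrV invrK. Qed.

Lemma eqC0_mulr_C0 x c : eps x = 1 -> C0 c -> x * c ~ x.
Proof. by move=> hx Cc; rewrite /eqC0; apply: C0_conj; auto. Qed.

Lemma map_mx_eps_entry m n (X : 'M[B]_(m, n)) : map_mx eps X = 0 -> forall i j, eps (X i j) = 0.
Proof. by move/matrixP=> X0 i j; move: (X0 i j); rewrite !mxE. Qed.

Lemma map_mulmx_eq0 m n p (X : 'M[B]_(m, n)) (Y : 'M[B]_(n, p)) :
  map_mx eps X = 0 \/ map_mx eps Y = 0 -> map_mx eps (X *m Y) = 0.
Proof. by rewrite map_mxM => -[] ->; rewrite ?mul0mx ?mulmx0. Qed.

Lemma map_mx_eps1_1D m n (X : 'M[B]_(m, n)) Y :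
  map_mx eps X = 0 \/ map_mx eps Y = 0 -> map_mx eps (1%:M + X *m Y) = 1%:M.
Proof. by move/map_mulmx_eq0; rewrite map_mxD map_mx1 => ->; rewrite addr0. Qed.

Lemma map_mx_eps1M k (X Y : 'M[B]_k) :
  map_mx eps X = 1%:M -> map_mx eps Y = 1%:M -> map_mx eps (X *m Y) = 1%:M.
Proof. by rewrite map_mxM => -> ->; rewrite mulmx1. Qed.

Lemma map_col_mx_eq0 m1 m2 n (X : 'M[B]_(m1, n)) (Y : 'M[B]_(m2, n)) :
  map_mx eps (col_mx X Y) = 0 -> map_mx eps X = 0 /\ map_mx eps Y = 0.
Proof. by rewrite map_col_mx -col_mx0 => /eq_col_mx. Qed.

Lemma map_row_mx_eq0 m n1 n2 (X : 'M[B]_(m, n1)) (Y : 'M[B]_(m, n2)) :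
  map_mx eps (row_mx X Y) = 0 -> map_mx eps X = 0 /\ map_mx eps Y = 0.
Proof. by rewrite map_row_mx -row_mx0 => /eq_row_mx. Qed.

Lemma map_block_eps1 k a (r : 'M[B]_(1, k)) c M :
  map_mx eps (block_mx a%:M r c M : 'M_(1 + k)) = 1%:M <->
  [/\ eps a = 1, map_mx eps r = 0, map_mx eps c = 0 & map_mx eps M = 1%:M].
Proof.
rewrite map_block_mx map_scalar_mx (scalar_mx_block 1 k); split.
  by case/eq_block_mx => /matrixP/(_ 0 0); rewrite !mxE /= !mulr1n => ? -> -> ->.
by case=> -> -> -> ->.
Qed.

Lemma Drep_eps1 k (G : 'M[B]_k) : map_mx eps G = 1%:M -> eps (Drep G) = 1.
Proof.
elim: k G => [|k IHk] G; first by rewrite rmorph1.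
have [a [r [c [M ->]]]] := mx_block1 G; case/map_block_eps1 => ha hr hc hM.
by rewrite Drep_block eps1M // IHk // map_mxB hM map_mulmx_eq0 ?subr0 //; right.
Qed.

Local Hint Resolve Drep_eps1 map_mx_eps1M : core.

Lemma Drep_1D_col_row k (c : 'M[B]_(k, 1)) (r : 'M[B]_(1, k)) :
  map_mx eps c = 0 \/ map_mx eps r = 0 -> Drep (1%:M + c *m r) ~ 1 + (r *m c) ord0 ord0.
Proof.
elim: k c r => [|k IHk] c r.
  by rewrite [(r *m c) _ _]mxE big_ord0 addr0 => _; apply: eqC0_refl.
have [c0 [c' ->]] := mx_col1 c; have [r0 [r' ->]] := mx_row1 r.
rewrite [c0]mx11_scalar [r0]mx11_scalar; move: (c0 0 0) (r0 0 0) => g p.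
rewrite -[k.+1]/(1 + k) => hcr.
have [hgp hcr'] : (eps g = 0 \/ eps p = 0) /\ (map_mx eps c' = 0 \/ map_mx eps r' = 0).
  case: hcr => [/map_col_mx_eq0 | /map_row_mx_eq0] [/map_mx_eps_entry/(_ 0 0) + ->].
    by rewrite mxE /= mulr1n; split; left.
  by rewrite mxE /= mulr1n; split; right.
have ugp : 1 + g * p \is a GRing.unit by auto.
have upg : 1 + p * g \is a GRing.unit by auto.
rewrite mul_row_col Drep_1D_col_rowE //.
set t := (1 + p * g)^-1; set x := 1 + (p * g + (r' *m c') ord0 ord0).
have ht : eps t = 1 by rewrite /t; auto.
have tpg : t * (1 + p * g) = 1 by rewrite mulVr.
have -> : (p%:M *m g%:M + r' *m c') ord0 ord0 = p * g + (r' *m c') ord0 ord0.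
  by rewrite -scalar_mxM mxE [_%:M _ _]mxE eqxx mulr1n.
have hx : eps x = 1.
  have hs : eps ((r' *m c') ord0 ord0) = 0.
    by apply: map_mx_eps_entry; apply: map_mulmx_eq0; case: hcr' => ->; [right | left].
  by rewrite /x addrA rmorphD hs addr0; auto.
have IH : Drep (1%:M + c' *m (t%:M *m r')) ~ t * x.
  have -> : t * x = 1 + ((t%:M *m r') *m c') ord0 ord0.
    by rewrite /x addrA mulrDr tpg -mulmxA mul_scalar_mx [in RHS]mxE.
  apply: IHk; case: hcr' => [-> | hr']; [left | right] => //.
  by apply: map_mulmx_eq0; right.
apply: (eqC0_trans (y := (1 + g * p) * (t * x))); first by auto.
  by apply: eqC0_mul; auto.
rewrite mulrA; apply: (eqC0_trans (y := x * ((1 + g * p) * t))); first by auto.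
  by apply: eqC0_mulC; auto.
by apply: eqC0_mulr_C0 => //; apply: C0_generator.
Qed.

Lemma Drep_mul k (al be : 'M[B]_k) : map_mx eps al = 1%:M -> map_mx eps be = 1%:M ->
  Drep (al *m be) ~ Drep al * Drep be.
Proof.
elim: k al be => [|k IHk] al be; first by rewrite /= mulr1; auto.
have [a [r [c [M ->]]]] := mx_block1 al; have [b [r' [c' [M' ->]]]] := mx_block1 be.
rewrite -[k.+1]/(1 + k).
case/map_block_eps1 => ha hr hc hM; case/map_block_eps1 => hb hr' hc' hM'.
set u := a * b + (r *m c') ord0 ord0.
have hu : eps u = 1.
  by rewrite rmorphD (map_mx_eps_entry (map_mulmx_eq0 (or_introl hr))) addr0; auto.
rewrite Drep_mul_block -/u ?eps1_unit // !Drep_block.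
set Sa := M - _; set Sb := M' - _; set Z := 1%:M - _.
have hSa : map_mx eps Sa = 1%:M by rewrite map_mxB hM map_mulmx_eq0 ?subr0 //; right.
have hSb : map_mx eps Sb = 1%:M by rewrite map_mxB hM' map_mulmx_eq0 ?subr0 //; right.
have hZ : map_mx eps Z = 1%:M by rewrite map_mxB map_mx1 map_mulmx_eq0 ?subr0 //; right.
have DZ : Drep Z ~ u^-1 * (a * b).
  have -> : u^-1 * (a * b) = 1 + ((u^-1)%:M *m r *m - c') ord0 ord0.
    rewrite -mulmxA mul_scalar_mx mulmxN mxE [in RHS]mxE mulrN.
    by rewrite -{1}(mulVr (eps1_unit hu)) -mulrBr /u addrK.
  rewrite /Z -mulmxA -mulNmx; apply: Drep_1D_col_row.
  by right; apply: map_mulmx_eq0; right.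
have DSZS : Drep (Sa *m Z *m Sb) ~ Drep Sa * (u^-1 * (a * b)) * Drep Sb.
  apply: (eqC0_trans (y := Drep (Sa *m Z) * Drep Sb)); first by auto.
    by apply: IHk; auto.
  apply: eqC0_mul; auto; apply: (eqC0_trans (y := Drep Sa * Drep Z)); first by auto.
    by apply: IHk.
  by apply: eqC0_mul; auto.
apply: (eqC0_trans (y := u * (Drep Sa * (u^-1 * (a * b)) * Drep Sb))); first by auto 10.
  by apply: eqC0_mul; auto.
have -> : u * (Drep Sa * (u^-1 * (a * b)) * Drep Sb)
          = u * Drep Sa * u^-1 * (a * (b * Drep Sb)) by rewrite !mulrA.
apply: (eqC0_trans (y := Drep Sa * (a * (b * Drep Sb)))); first by auto.
  by apply: eqC0_mul; auto; apply: eqC0_conj; auto.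
rewrite !mulrA; apply: eqC0_mul; auto; apply: eqC0_mul; auto.
by apply: eqC0_mulC; auto.
Qed.

Lemma Drep_1DmulmxC m n (al : 'M[B]_(m, n)) (be : 'M[B]_(n, m)) :
  map_mx eps al = 0 \/ map_mx eps be = 0 ->
  Drep (1%:M + al *m be) ~ Drep (1%:M + be *m al).
Proof.
elim: n al be => [|n IHn] al be.
  by rewrite [al]thinmx0 mul0mx addr0 Drep1 /=; auto.
have [a0 [a' ->]] := mx_row1 al; have [b0 [b' ->]] := mx_col1 be.
rewrite -[n.+1]/(1 + n) => h.
have [h0 h'] : (map_mx eps a0 = 0 \/ map_mx eps b0 = 0) /\
               (map_mx eps a' = 0 \/ map_mx eps b' = 0).
  by case: h => [/map_row_mx_eq0 | /map_col_mx_eq0] [-> ->]; split; [left|left|right|right].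
set s := (b0 *m a0) ord0 ord0; set t := (1 + s)^-1; set W := 1%:M - a0 *m t%:M *m b0.
have hs : eps (1 + s) = 1.
  by rewrite rmorphD (map_mx_eps_entry (map_mulmx_eq0 _)) ?addr0 //; case: h0; auto.
have PW : (1%:M + a0 *m b0) *m W = 1%:M.
  by apply: mulmx1D_push; rewrite [b0 *m a0]mx11_scalar -raddfD -scalar_mxM mulrV; auto.
have -> : 1%:M + row_mx a0 a' *m col_mx b0 b' = (1%:M + a0 *m b0) *m (1%:M + W *m a' *m b').
  by rewrite mul_row_col mulmxDr mulmx1 !mulmxA PW mul1mx addrA.
have -> : Drep (1%:M + col_mx b0 b' *m row_mx a0 a') = (1 + s) * Drep (1%:M + b' *m W *m a').
  rewrite mul_col_row (scalar_mx_block 1 n) add_block_mx !add0r [b0 *m a0]mx11_scalar.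
  rewrite -[1%:M + _%:M]raddfD Drep_block -/s -/t; congr (_ * Drep _).
  by rewrite /W mulmxBr mulmx1 mulmxBl addrA !mulmxA.
have hW : map_mx eps (W *m a') = 0 \/ map_mx eps b' = 0.
  by case: h' => ?; [left; apply: map_mulmx_eq0; right | right].
have hW' : map_mx eps (b' *m W) = 0 \/ map_mx eps a' = 0.
  by case: h' => ?; [right | left; apply: map_mulmx_eq0; left].
apply: (eqC0_trans (y := Drep (1%:M + a0 *m b0) * Drep (1%:M + W *m a' *m b'))).
- by apply: eps1M; apply: Drep_eps1; apply: map_mx_eps1_1D.
- by apply: Drep_mul; apply: map_mx_eps1_1D.
- apply: eqC0_mul; [by auto | apply: Drep_eps1; exact: map_mx_eps1_1D | |].
    exact: Drep_1D_col_row.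
  by rewrite -[b' *m W *m a']mulmxA; apply: IHn.
Qed.

End Augmentation.

Lemma local_augmentation_unit (B : unitRingType) (A : nzRingType) (eps : {rmorphism B -> A}) :
  local_augmentation eps -> forall x, eps x = 1 -> x \is a GRing.unit.
Proof.
move=> [_ eps_local] x hx; have [N [xN Nx]] : mx_invertible (x%:M : 'M[B]_1).
  by apply: eps_local; rewrite map_scalar_mx hx; exists 1%:M; rewrite mul1mx.
apply/GRing.unitrP; exists (N 0 0).
by move/matrixP: Nx => /(_ 0 0); move/matrixP: xN => /(_ 0 0); rewrite !mxE !big_ord1 !mxE /= !mulr1n.
Qed.

Theorem proposition4p5 (B : unitRingType) (A : nzRingType)
    (eps : {rmorphism B -> A}) :
  local_augmentation eps ->
  (forall (n : nat) (alpha beta : 'M[B]_n.+1),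
      mx_invertible alpha -> mx_invertible beta ->
      map_mx eps alpha = 1%:M -> map_mx eps beta = 1%:M ->
      eqC0 eps (Drep (alpha *m beta)) (Drep alpha * Drep beta)) /\
  (forall (m n : nat) (alpha : 'M[B]_(m.+1, n.+1)) (beta : 'M[B]_(n.+1, m.+1)),
      (map_mx eps alpha = 0 \/ map_mx eps beta = 0) ->
      eqC0 eps (Drep (1%:M + alpha *m beta)) (Drep (1%:M + beta *m alpha))).
Proof.
move/local_augmentation_unit=> eps1_unit; split=> [n al be _ _ |m n al be].
  exact: Drep_mul.
exact: Drep_1DmulmxC.
Qed.
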